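(* Let $V$ be as defined in the context. Then $V$ has the same distribution as $\sum_{i=1}^{K}Y_i$, where: - $K$ is Poisson with mean $\frac{\theta}{(1-q)\gamma}$; - $Y_1,Y_2,\dots$ are i.i.d. and independent of $K$, each distributed as the size at an independent time $X\sim\mathrm{Exp}(\delta)$ of a linear birth–death process with rates $\alpha,\beta$ started from one cell. In particular $\mathbb{E}[\varphi_X(z)]=1-(1-q)\,{}_2F_1(1,\gamma;1+\gamma;\xi(z))$, where $\varphi_s(z)=1-\frac{1-q}{1-\xi(z)e^{-\lambda s}}$ is the probability generating function of the birth–death process at time $s$. Equivalently, $$\log\mathbb{E}[z^V]=\frac{\theta}{(1-q)\gamma}\int_0^\infty(\varphi_t(z)-1)\,\delta e^{-\delta t}\,dt .$$
   Context: Fix $\delta>0$ and $\alpha>\beta\ge0$, put $\lambda=\alpha-\beta$, $q=\beta/\alpha$, $\gamma=\delta/\lambda$, and fix $\theta>0$. Let $\xi(z)=\frac{q-z}{1-z}$. Let $V$ be a random variable on $\{0,1,\dots\}$ with $\log\mathbb{E}[z^V]=-\frac{\theta}{\gamma}{}_2F_1(1,\gamma;1+\gamma;\xi(z))$ for $z\in[0,1)$, where ${}_2F_1$ is the Gauss hypergeometric function. (This $V$ is the distributional limit of the total mutant count as $N\to\infty$, $\nu=\alpha\theta/N$, in the model where the wild type is $e^{\delta t}$ and mutants appear at Poisson rate $\nu e^{\delta t}$.) *)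

From Stdlib Require Import Reals Factorial.
Open Scope R_scope.

Definition lam (alpha beta : R) : R := alpha - beta.
Definition qq (alpha beta : R) : R := beta / alpha.
Definition gam (delta alpha beta : R) : R := delta / (alpha - beta).

Definition xi (q z : R) : R := (q - z) / (1 - z).

Definition phi (alpha beta s z : R) : R :=
  1 - (1 - qq alpha beta) / (1 - xi (qq alpha beta) z * exp (- lam alpha beta * s)).

Definition has_integral_0_inf (f : R -> R) (l : R) : Prop :=
  (forall b, 0 <= b -> exists pr : Riemann_integrable f 0 b, True) /\
  (forall eps, 0 < eps -> exists M, forall b (pr : Riemann_integrable f 0 b),
      M <= b -> Rabs (RiemannInt pr - l) < eps).

Definition has_integral_0_1 (f : R -> R) (l : R) : Prop :=
  (forall a, 0 < a <= 1 -> exists pr : Riemann_integrable f a 1, True) /\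
  (forall eps, 0 < eps -> exists d, 0 < d /\ forall a (pr : Riemann_integrable f a 1),
      0 < a < d -> a <= 1 -> Rabs (RiemannInt pr - l) < eps).

(** hyp2F1_1 g x F  <->  F = 2F1(1, g; 1+g; x), via Euler's integral
    2F1(1,g;1+g;x) = g * int_0^1 t^(g-1) (1 - x t)^(-1) dt  (g > 0, x < 1),
    which is the analytic continuation of the Gauss series to x < 1. *)
Definition hyp2F1_1 (g x F : R) : Prop :=
  has_integral_0_1 (fun t => g * Rpower t (g - 1) / (1 - x * t)) F.

Definition is_pmf (p : nat -> R) : Prop :=
  (forall n, 0 <= p n) /\ infinite_sum p 1.

Definition pgf_at (p : nat -> R) (z G : R) : Prop :=
  infinite_sum (fun n => p n * z ^ n) G.

(** Law of the linear birth-death process (birth rate alpha, death rate beta,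
    one initial cell): P t is the law of the population size at time t,
    characterized by its pgf phi_t. *)
Definition is_BD_law (alpha beta : R) (P : R -> nat -> R) : Prop :=
  forall t, 0 <= t -> is_pmf (P t) /\
    (forall z, 0 <= z < 1 -> pgf_at (P t) z (phi alpha beta t z)).

Definition conv (p r : nat -> R) (n : nat) : R :=
  sum_f_R0 (fun i => p i * r (n - i)%nat) n.

Fixpoint conv_pow (p : nat -> R) (k : nat) : nat -> R :=
  match k with
  | O => fun n => match n with O => 1 | _ => 0 end
  | S k' => conv p (conv_pow p k')
  end.

Definition poisson_pmf (mu : R) (k : nat) : R := exp (- mu) * mu ^ k / INR (fact k).

(* Substituting u = exp (-lambda t) in Euler's integral for 2F1(1,gamma;1+gamma;xi) shows that
   F = E[1 / (1 - xi exp (-lambda X))] for X ~ Exp(delta).  Since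
   phi_t(z) = 1 - (1-q) / (1 - xi exp (-lambda t)), this gives E[phi_X(z)] = 1 - (1-q) F, and
   then log E[z^V] = -(theta/gamma) F = mu (E[phi_X(z)] - 1) with mu = theta / ((1-q) gamma).
   Exchanging the pgf series with the integral in t (the tails of the pgf of Z_t are at most
   z^(N+1), uniformly in t) identifies E[phi_X(z)] as the pgf of Y, and by Tonelli the compound
   Poisson law sum_k Pois_mu(k) pY^{*k} has pgf exp (mu (G_Y - 1)).  So it has the same pgf as V
   on (0,1), hence the same coefficients. *)

From Stdlib Require Import Reals Factorial Lra Lia.
From Coquelicot Require Import Coquelicot.
Open Scope R_scope.

Definition is_RInt_pinfty (f : R -> R) (l : R) : Prop :=
  (forall b, 0 <= b -> ex_RInt f 0 b) /\ is_lim (fun b => RInt f 0 b) p_infty l.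

Lemma has_integral_0_inf_RInt_pinfty f l :
  has_integral_0_inf f l <-> is_RInt_pinfty f l.
Proof.
  split; intros [Hex Hlim]; split.
  - intros b Hb; destruct (Hex b Hb) as [pr _]; exact (ex_RInt_Reals_1 _ _ _ pr).
  - apply is_lim_spec; intros eps.
    destruct (Hlim eps (cond_pos eps)) as [M HM]; exists (Rmax 0 M); intros b Hb.
    destruct (Hex b) as [pr _]; [apply Rle_trans with (Rmax 0 M); [apply Rmax_l | lra]|].
    rewrite (RInt_Reals _ _ _ pr); apply HM.
    apply Rle_trans with (Rmax 0 M); [apply Rmax_r | lra].
  - intros b Hb; exists (ex_RInt_Reals_0 _ _ _ (Hex b Hb)); exact I.
  - intros eps Heps; apply is_lim_spec in Hlim.
    destruct (Hlim (mkposreal eps Heps)) as [M HM]; exists (Rmax 0 M + 1); intros b pr Hb.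
    rewrite <- RInt_Reals; apply HM.
    pose proof (Rmax_r 0 M); lra.
Qed.

Lemma is_RInt_pinfty_ext f g l :
  (forall t, 0 <= t -> f t = g t) -> is_RInt_pinfty f l -> is_RInt_pinfty g l.
Proof.
  intros Efg [Hex Hlim]; split.
  - intros b Hb; apply (ex_RInt_ext f); [|exact (Hex b Hb)].
    intros x; rewrite Rmin_left by lra; intros Hx; apply Efg; lra.
  - apply (is_lim_ext_loc (fun b => RInt f 0 b)); [|exact Hlim].
    exists 0; intros b Hb; apply RInt_ext.
    intros x; rewrite Rmin_left by lra; intros Hx; apply Efg; lra.
Qed.

Lemma is_RInt_pinfty_scal f c l :
  is_RInt_pinfty f l -> is_RInt_pinfty (fun t => c * f t) (c * l).
Proof.
  intros [Fex Flim]; split.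
  - intros b Hb; apply (ex_RInt_scal (V := R_NormedModule)); auto.
  - apply (is_lim_ext_loc (fun b => c * RInt f 0 b)).
    + exists 0; intros b Hb; symmetry; apply (RInt_scal (V := R_CompleteNormedModule)).
      apply Fex; lra.
    + exact (is_lim_scal_l _ c _ l Flim).
Qed.

Lemma is_RInt_pinfty_plus f g lf lg :
  is_RInt_pinfty f lf -> is_RInt_pinfty g lg ->
  is_RInt_pinfty (fun t => f t + g t) (lf + lg).
Proof.
  intros [Fex Flim] [Gex Glim]; split.
  - intros b Hb; apply (ex_RInt_plus (V := R_NormedModule)); auto.
  - apply (is_lim_ext_loc (fun b => RInt f 0 b + RInt g 0 b)).
    + exists 0; intros b Hb; symmetry; apply (RInt_plus (V := R_CompleteNormedModule));
        [apply Fex | apply Gex]; lra.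
    + apply is_lim_plus'; assumption.
Qed.

Lemma is_RInt_pinfty_le f g lf lg :
  (forall t, 0 <= t -> f t <= g t) ->
  is_RInt_pinfty f lf -> is_RInt_pinfty g lg -> lf <= lg.
Proof.
  intros Hfg [Fex Flim] [Gex Glim].
  apply (is_lim_le_loc (fun b => RInt f 0 b) (fun b => RInt g 0 b) p_infty lf lg);
    [|exact Flim|exact Glim].
  exists 0; intros b Hb; apply RInt_le; auto with real.
  intros x Hx; apply Hfg; lra.
Qed.

Lemma is_RInt_pinfty_ge_0 f l :
  (forall t, 0 <= t -> 0 <= f t) -> is_RInt_pinfty f l -> 0 <= l.
Proof.
  intros Hf [Fex Flim].
  apply (is_lim_le_loc (fun _ => 0) (fun b => RInt f 0 b) p_infty 0 l);
    [| apply is_lim_const | exact Flim].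
  exists 0; intros b Hb; apply RInt_ge_0; [lra | apply Fex; lra |].
  intros x Hx; apply Hf; lra.
Qed.

Lemma is_lim_exp_neg c : 0 < c -> is_lim (fun t => exp (- c * t)) p_infty 0.
Proof.
  intros Hc; apply (is_lim_comp exp (fun t => - c * t) p_infty 0 m_infty).
  - exact is_lim_exp_m.
  - apply is_lim_spec; intros M; exists (- M / c); intros t Ht.
    apply Rlt_div_l in Ht; lra.
  - exists 0; intros t _; discriminate.
Qed.

Lemma exp_nonpos_le_1 x : x <= 0 -> exp x <= 1.
Proof.
  intros [Hx | ->]; [left; rewrite <- exp_0; exact (exp_increasing _ _ Hx)|].
  rewrite exp_0; lra.
Qed.

Lemma one_sub_mul_pos x u : x < 1 -> 0 < u <= 1 -> 0 < 1 - x * u.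
Proof. intros Hx Hu; destruct (Rle_dec x 0); nra. Qed.

Lemma is_RInt_exp_density delta :
  0 < delta -> is_RInt_pinfty (fun t => delta * exp (- delta * t)) 1.
Proof.
  intros Hd.
  assert (Hval : forall b, is_RInt (fun t => delta * exp (- delta * t)) 0 b
                                   (1 - exp (- delta * b))).
  { intros b.
    replace (1 - exp (- delta * b)) with (minus (- exp (- delta * b)) (- exp (- delta * 0)))
      by (unfold minus, plus, opp; simpl; rewrite Rmult_0_r, exp_0; ring).
    apply (is_RInt_derive (V := R_CompleteNormedModule) (fun t => - exp (- delta * t))).
    - intros x _; auto_derive; auto; ring.
    - intros x _; apply (ex_derive_continuous (V := R_NormedModule)); auto_derive; auto. }
  split.
  - intros b _; eexists; apply Hval.
  - apply (is_lim_ext_loc (fun b => 1 - exp (- delta * b))).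
    + exists 0; intros b _; symmetry; exact (is_RInt_unique _ _ _ _ (Hval b)).
    + assert (H := is_lim_minus' _ _ p_infty 1 0 (is_lim_const 1 p_infty)
                       (is_lim_exp_neg delta Hd)).
      rewrite Rminus_0_r in H; exact H.
Qed.

Lemma has_integral_0_1_exp_subst f lm F :
  0 < lm -> (forall u, 0 < u <= 1 -> continuous f u) -> has_integral_0_1 f F ->
  is_RInt_pinfty (fun t => lm * exp (- lm * t) * f (exp (- lm * t))) F.
Proof.
  intros Hl Hf [Fex Flim].
  assert (He : forall t, 0 <= t -> 0 < exp (- lm * t) <= 1).
  { intros t Ht; split; [apply exp_pos | apply exp_nonpos_le_1; nra]. }
  assert (Hval : forall b, 0 <= b ->
    is_RInt (fun t => lm * exp (- lm * t) * f (exp (- lm * t))) 0 b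
            (RInt f (exp (- lm * b)) 1)).
  { intros b Hb.
    assert (Hg : forall t, is_derive (fun t => exp (- lm * t)) t (- lm * exp (- lm * t)))
      by (intros t; auto_derive; auto; ring).
    assert (Hdg : forall t, continuous (fun t => - lm * exp (- lm * t)) t)
      by (intros t; apply (ex_derive_continuous (V := R_NormedModule)); auto_derive; auto).
    assert (Hcomp := is_RInt_comp (V := R_CompleteNormedModule) f
      (fun t => exp (- lm * t)) (fun t => - lm * exp (- lm * t)) 0 b).
    rewrite Rmin_left, Rmax_right, Rmult_0_r, exp_0 in Hcomp by lra.
    assert (Hopp := is_RInt_opp (V := R_NormedModule) _ _ _ _
      (Hcomp (fun t Ht => Hf _ (He t (proj1 Ht))) (fun t _ => conj (Hg t) (Hdg t)))).
    rewrite (opp_RInt_swap (V := R_CompleteNormedModule)) in Hopp.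
    - apply (is_RInt_ext (V := R_NormedModule)) with (2 := Hopp).
      intros t _; unfold opp, scal; simpl; unfold mult; simpl; ring.
    - destruct (Fex (exp (- lm * b)) (He b Hb)) as [pr _].
      apply ex_RInt_swap, ex_RInt_Reals_1, pr. }
  split.
  - intros b Hb; eexists; exact (Hval b Hb).
  - apply (is_lim_ext_loc (fun b => RInt f (exp (- lm * b)) 1)).
    { exists 0; intros b Hb; symmetry; apply is_RInt_unique, Hval; lra. }
    apply is_lim_spec; intros eps.
    destruct (Flim eps (cond_pos eps)) as [d [Hd Hfd]].
    assert (Hexp := proj2 (is_lim_spec _ _ _) (is_lim_exp_neg lm Hl) (mkposreal d Hd)).
    destruct Hexp as [M HM]; exists (Rmax 0 M); intros b Hb.
    assert (Hb0 : 0 <= b) by (pose proof (Rmax_l 0 M); lra).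
    assert (Hsmall := HM b ltac:(pose proof (Rmax_r 0 M); lra)); simpl in Hsmall.
    rewrite Rminus_0_r, Rabs_pos_eq in Hsmall by (left; apply exp_pos).
    destruct (Fex (exp (- lm * b)) (He b Hb0)) as [pr _].
    rewrite (RInt_Reals _ _ _ pr); apply Hfd;
      [split; [apply exp_pos | exact Hsmall] | apply He, Hb0].
Qed.

Lemma qq_bounds alpha beta : 0 <= beta -> beta < alpha -> 0 <= qq alpha beta < 1.
Proof.
  intros Hb Hab; unfold qq; split.
  - apply Rdiv_le_0_compat; lra.
  - apply (Rdiv_lt_1 beta alpha); lra.
Qed.

Lemma xi_lt_1 q z : q < 1 -> 0 <= z < 1 -> xi q z < 1.
Proof. intros Hq Hz; unfold xi; apply (Rdiv_lt_1 (q - z) (1 - z)); lra. Qed.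

Lemma hyp2F1_1_exp_mean delta lm x F :
  0 < delta -> 0 < lm -> x < 1 -> hyp2F1_1 (delta / lm) x F ->
  is_RInt_pinfty (fun t => delta * exp (- delta * t) / (1 - x * exp (- lm * t))) F.
Proof.
  intros Hd Hl Hx HF.
  apply (is_RInt_pinfty_ext
    (fun t => lm * exp (- lm * t) *
      ((delta / lm) * Rpower (exp (- lm * t)) (delta / lm - 1) / (1 - x * exp (- lm * t))))).
  - intros t Ht.
    assert (Hle : - lm * t <= 0) by nra.
    assert (Hden := one_sub_mul_pos x _ Hx (conj (exp_pos (- lm * t)) (exp_nonpos_le_1 _ Hle))).
    assert (exp (- lm * t) <> 0) by apply Rgt_not_eq, exp_pos.
    unfold Rpower; rewrite ln_exp.
    replace ((delta / lm - 1) * (- lm * t)) with (- delta * t + lm * t) by (field; lra).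
    rewrite exp_plus.
    replace (exp (lm * t)) with (/ exp (- lm * t)) by (rewrite <- exp_Ropp; f_equal; ring).
    field; lra.
  - apply (has_integral_0_1_exp_subst
      (fun u => (delta / lm) * Rpower u (delta / lm - 1) / (1 - x * u))); [exact Hl | | exact HF].
    intros u Hu; apply (ex_derive_continuous (V := R_NormedModule)).
    assert (Hden := one_sub_mul_pos x u Hx Hu).
    unfold Rpower; auto_derive; repeat split; lra.
Qed.

Lemma phi_sub_1_mean delta alpha beta z F :
  0 < delta -> 0 <= beta -> beta < alpha -> 0 <= z < 1 ->
  hyp2F1_1 (gam delta alpha beta) (xi (qq alpha beta) z) F ->
  is_RInt_pinfty (fun t => (phi alpha beta t z - 1) * (delta * exp (- delta * t)))
                 (- (1 - qq alpha beta) * F).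
Proof.
  intros Hd Hb Hab Hz HF.
  assert (Hq := qq_bounds alpha beta Hb Hab).
  assert (Hx := xi_lt_1 _ z (proj2 Hq) Hz).
  assert (Hl : 0 < lam alpha beta) by (unfold lam; lra).
  apply (is_RInt_pinfty_ext (fun t => - (1 - qq alpha beta) *
    (delta * exp (- delta * t) / (1 - xi (qq alpha beta) z * exp (- lam alpha beta * t))))).
  - intros t Ht.
    assert (Hle : - lam alpha beta * t <= 0) by nra.
    assert (Hden := one_sub_mul_pos _ _ Hx (conj (exp_pos _) (exp_nonpos_le_1 _ Hle))).
    unfold phi; field; lra.
  - apply is_RInt_pinfty_scal, hyp2F1_1_exp_mean; assumption.
Qed.

Lemma phi_mean delta alpha beta z F :
  0 < delta -> 0 <= beta -> beta < alpha -> 0 <= z < 1 ->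
  hyp2F1_1 (gam delta alpha beta) (xi (qq alpha beta) z) F ->
  is_RInt_pinfty (fun t => phi alpha beta t z * (delta * exp (- delta * t)))
                 (1 - (1 - qq alpha beta) * F).
Proof.
  intros Hd Hb Hab Hz HF.
  replace (1 - (1 - qq alpha beta) * F) with (1 + - (1 - qq alpha beta) * F) by ring.
  apply (is_RInt_pinfty_ext (fun t => delta * exp (- delta * t) +
                              (phi alpha beta t z - 1) * (delta * exp (- delta * t)))).
  - intros t _; ring.
  - apply is_RInt_pinfty_plus; [apply is_RInt_exp_density | apply phi_sub_1_mean]; assumption.
Qed.

Lemma is_series_le a b la lb :
  (forall n, a n <= b n) -> is_series a la -> is_series b lb -> la <= lb.
Proof.
  intros Hab Ha Hb; apply (is_lim_seq_le (sum_n a) (sum_n b) la lb); [|exact Ha|exact Hb].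
  intros N; rewrite !sum_n_Reals; apply sum_Rle; auto.
Qed.

Lemma is_series_ge_0 a l : (forall n, 0 <= a n) -> is_series a l -> 0 <= l.
Proof.
  intros Ha Hl; apply (is_lim_seq_le (fun _ => 0) (sum_n a) 0 l);
    [| apply is_lim_seq_const | exact Hl].
  intros N; rewrite sum_n_Reals; apply cond_pos_sum, Ha.
Qed.

Lemma is_series_tail (a : nat -> R) (l : R) (N : nat) :
  is_series a l -> is_series (fun k => a (S N + k)%nat) (l - sum_n a N).
Proof.
  intros Hl; apply (is_series_incr_n a (S N)); [lia|].
  match goal with |- is_series _ ?m => replace m with l; [exact Hl|] end.
  unfold plus; simpl; unfold Rminus; rewrite Rplus_assoc, Rplus_opp_l; ring.
Qed.

Lemma is_series_partial_le (a : nat -> R) (l : R) (N : nat) :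
  (forall n, 0 <= a n) -> is_series a l -> sum_n a N <= l.
Proof.
  intros Ha Hl.
  assert (H := is_series_ge_0 _ _ (fun k => Ha (S N + k)%nat) (is_series_tail a l N Hl)); lra.
Qed.

Lemma is_series_term_le (a : nat -> R) (l : R) (N : nat) :
  (forall n, 0 <= a n) -> is_series a l -> a N <= l.
Proof.
  intros Ha Hl; apply Rle_trans with (sum_n a N); [|exact (is_series_partial_le a l N Ha Hl)].
  destruct N as [|N]; [rewrite sum_O; lra|].
  rewrite sum_Sn; unfold plus; simpl.
  assert (0 <= sum_n a N) by (rewrite sum_n_Reals; apply cond_pos_sum, Ha); lra.
Qed.

Lemma pgf_tail_bound (a : nat -> R) (z G : R) (N : nat) :
  (forall n, 0 <= a n) -> is_series a 1 -> 0 <= z < 1 ->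
  is_series (fun n => a n * z ^ n) G ->
  sum_n (fun n => a n * z ^ n) N <= G <= sum_n (fun n => a n * z ^ n) N + z ^ S N.
Proof.
  intros Ha Ha1 Hz HG.
  assert (Hpow : forall k, 0 <= z ^ k) by (intros; apply pow_le; lra).
  split; [apply is_series_partial_le; [intros; apply Rmult_le_pos; auto | exact HG]|].
  assert (Hpart : 0 <= sum_n a N) by (rewrite sum_n_Reals; apply cond_pos_sum, Ha).
  assert (H : G - sum_n (fun n => a n * z ^ n) N <= z ^ S N * (1 - sum_n a N)).
  { apply (is_series_le (fun k => a (S N + k)%nat * z ^ (S N + k))
                        (fun k => z ^ S N * a (S N + k)%nat)).
    - intros k; rewrite pow_add; specialize (Ha (S N + k)%nat).
      assert (z ^ k <= 1) by (rewrite <- (pow1 k); apply pow_incr; lra).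
      assert (0 <= a (S N + k)%nat * z ^ S N) by (apply Rmult_le_pos; auto).
      nra.
    - exact (is_series_tail (fun n => a n * z ^ n) G N HG).
    - exact (is_series_scal_l (V := R_NormedModule) _ _ _ (is_series_tail a 1 N Ha1)). }
  specialize (Hpow (S N)); nra.
Qed.

Lemma mixture_pgf (P : R -> nat -> R) (w Phi : R -> R) (p : nat -> R) (z g : R) :
  0 <= z < 1 -> (forall t, 0 <= t -> 0 <= w t) -> is_RInt_pinfty w 1 ->
  (forall t, 0 <= t -> (forall n, 0 <= P t n) /\ is_series (P t) 1) ->
  (forall t, 0 <= t -> is_series (fun n => P t n * z ^ n) (Phi t)) ->
  (forall n, is_RInt_pinfty (fun t => P t n * w t) (p n)) ->
  is_RInt_pinfty (fun t => Phi t * w t) g ->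
  is_series (fun n => p n * z ^ n) g.
Proof.
  intros Hz Hw Hw1 HP HPhi Hp Hg.
  set (Sz t N := sum_n (fun n => P t n * z ^ n) N).
  assert (HS : forall N,
    is_RInt_pinfty (fun t => Sz t N * w t) (sum_n (fun n => p n * z ^ n) N)).
  { induction N as [|N IH].
    - apply (is_RInt_pinfty_ext (fun t => z ^ 0 * (P t 0%nat * w t))).
      + intros t _; unfold Sz; rewrite sum_O; ring.
      + rewrite sum_O, Rmult_comm; apply is_RInt_pinfty_scal, Hp.
    - apply (is_RInt_pinfty_ext (fun t => Sz t N * w t + z ^ S N * (P t (S N) * w t))).
      + intros t _; unfold Sz; rewrite sum_Sn; unfold plus; simpl; ring.
      + rewrite sum_Sn; unfold plus; simpl.
        rewrite (Rmult_comm (p (S N))); apply is_RInt_pinfty_plus; [exact IH|].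
        apply is_RInt_pinfty_scal, Hp. }
  assert (Hbounds : forall N, sum_n (fun n => p n * z ^ n) N <= g <=
                              sum_n (fun n => p n * z ^ n) N + z ^ S N).
  { intros N.
    assert (Htail : forall t, 0 <= t -> Sz t N <= Phi t <= Sz t N + z ^ S N).
    { intros t Ht; destruct (HP t Ht) as [HP0 HP1]; apply pgf_tail_bound; auto. }
    split.
    - apply (is_RInt_pinfty_le (fun t => Sz t N * w t) (fun t => Phi t * w t)); auto.
      intros t Ht; apply Rmult_le_compat_r; [apply Hw | apply Htail]; exact Ht.
    - rewrite <- (Rmult_1_r (z ^ S N)).
      apply (is_RInt_pinfty_le (fun t => Phi t * w t) (fun t => Sz t N * w t + z ^ S N * w t));
        [| exact Hg | apply is_RInt_pinfty_plus; [apply HS | apply is_RInt_pinfty_scal, Hw1]].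
      intros t Ht; rewrite <- Rmult_plus_distr_r; apply Rmult_le_compat_r;
        [apply Hw | apply Htail]; exact Ht. }
  apply (is_lim_seq_le_le (fun N => g - z ^ S N) (sum_n (fun n => p n * z ^ n))
                          (fun _ => g) g).
  - intros N; specialize (Hbounds N); lra.
  - replace (Finite g) with (Finite (g - 0)) by (f_equal; ring).
    apply is_lim_seq_minus'; [apply is_lim_seq_const|].
    apply (is_lim_seq_incr_1 (fun N => z ^ N)), is_lim_seq_geom.
    rewrite Rabs_pos_eq; lra.
  - apply is_lim_seq_const.
Qed.

Lemma is_series_sum_n (v : nat -> nat -> R) (l : nat -> R) (N : nat) :
  (forall i, is_series (fun k => v i k) (l i)) ->
  is_series (fun k => sum_n (fun i => v i k) N) (sum_n l N).
Proof.
  intros Hv; induction N as [|N IH].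
  - rewrite sum_O; apply (is_series_ext (fun k => v 0%nat k)); [|apply Hv].
    intros k; rewrite sum_O; reflexivity.
  - rewrite sum_Sn; apply (is_series_ext (fun k => plus (sum_n (fun i => v i k) N) (v (S N) k))).
    + intros k; rewrite sum_Sn; reflexivity.
    + apply (is_series_plus (V := R_NormedModule)); [exact IH | apply Hv].
Qed.

Lemma is_series_swap_nonneg (u : nat -> nat -> R) (s : nat -> R) (L : R) :
  (forall k n, 0 <= u k n) -> (forall k, is_series (u k) (s k)) -> is_series s L ->
  (forall n, ex_series (fun k => u k n)) /\ is_series (fun n => Series (fun k => u k n)) L.
Proof.
  intros Hu Hs HS.
  assert (Hex : forall n, ex_series (fun k => u k n)).
  { intros n; apply (ex_series_le (V := R_CompleteNormedModule) _ s); [|exists L; exact HS].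
    intros k; rewrite Rabs_pos_eq by apply Hu; exact (is_series_term_le _ _ n (Hu k) (Hs k)). }
  split; [exact Hex|].
  set (r n := Series (fun k => u k n)).
  assert (Hr : forall n, is_series (fun k => u k n) (r n))
    by (intros n; apply Series_correct, Hex).
  assert (Hr0 : forall n, 0 <= r n)
    by (intros n; exact (is_series_ge_0 _ _ (fun k => Hu k n) (Hr n))).
  assert (Hupper : forall N, sum_n r N <= L).
  { intros N; apply (is_series_le (fun k => sum_n (u k) N) s _ _); [| | exact HS].
    - intros k; apply is_series_partial_le; [apply Hu | apply Hs].
    - exact (is_series_sum_n (fun n k => u k n) r N Hr). }
  destruct (ex_finite_lim_seq_incr (sum_n r) L) as [T HT]; [| exact Hupper |].
  { intros N; rewrite sum_Sn; unfold plus; simpl; specialize (Hr0 (S N)); lra. }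
  assert (HTS : T <= L).
  { apply (is_lim_seq_le _ (fun _ => L) T L Hupper HT (is_lim_seq_const L)). }
  assert (HST : L <= T).
  { apply (is_lim_seq_le (sum_n s) (fun _ => T) L T); [| exact HS | apply is_lim_seq_const].
    intros K; apply (is_series_le (fun n => sum_n (fun k => u k n) K) r _ _); [| | exact HT].
    - intros n; apply is_series_partial_le; [intros; apply Hu | apply Hr].
    - exact (is_series_sum_n u s K Hs). }
  replace L with T by lra; exact HT.
Qed.

Lemma conv_ge_0 p r n : (forall n, 0 <= p n) -> (forall n, 0 <= r n) -> 0 <= conv p r n.
Proof. intros Hp Hr; apply cond_pos_sum; intros i; apply Rmult_le_pos; auto. Qed.

Lemma conv_pow_ge_0 p k n : (forall n, 0 <= p n) -> 0 <= conv_pow p k n.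
Proof.
  intros Hp; revert n; induction k as [|k IH]; intros n.
  - destruct n; simpl; lra.
  - apply conv_ge_0; auto.
Qed.

Lemma conv_pgf (p r : nat -> R) (z Gp Gr : R) :
  (forall n, 0 <= p n) -> (forall n, 0 <= r n) -> 0 <= z ->
  is_series (fun n => p n * z ^ n) Gp -> is_series (fun n => r n * z ^ n) Gr ->
  is_series (fun n => conv p r n * z ^ n) (Gp * Gr).
Proof.
  intros Hp Hr Hz HGp HGr.
  assert (Hpow : forall n, 0 <= z ^ n) by (intros; apply pow_le, Hz).
  apply (is_series_ext
    (fun n => sum_f_R0 (fun k => p k * z ^ k * (r (n - k)%nat * z ^ (n - k))) n)).
  - intros n; unfold conv; rewrite Rmult_comm, scal_sum; apply sum_eq; intros i Hi.
    replace (z ^ n) with (z ^ i * z ^ (n - i)) by (rewrite <- pow_add; f_equal; lia); ring.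
  - apply (is_series_mult_pos (fun n => p n * z ^ n) (fun n => r n * z ^ n)); auto;
      intros n; apply Rmult_le_pos; auto.
Qed.

Lemma conv_pow_pgf (p : nat -> R) (z G : R) (k : nat) :
  (forall n, 0 <= p n) -> 0 <= z -> is_series (fun n => p n * z ^ n) G ->
  is_series (fun n => conv_pow p k n * z ^ n) (G ^ k).
Proof.
  intros Hp Hz HG; induction k as [|k IH].
  - change (G ^ 0) with 1.
    apply (is_lim_seq_ext (fun _ => 1) (sum_n (fun n => conv_pow p 0 n * z ^ n)) 1);
      [| apply is_lim_seq_const].
    induction n as [|n IH]; [rewrite sum_O; simpl; ring|].
    rewrite sum_Sn, <- IH; unfold plus; simpl; ring.
  - apply conv_pgf; auto; intros n; apply conv_pow_ge_0, Hp.
Qed.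

Lemma poisson_pmf_ge_0 mu k : 0 <= mu -> 0 <= poisson_pmf mu k.
Proof.
  intros Hmu; unfold poisson_pmf; apply Rdiv_le_0_compat.
  - apply Rmult_le_pos; [left; apply exp_pos | apply pow_le, Hmu].
  - apply INR_fact_lt_0.
Qed.

Lemma poisson_pgf mu x :
  is_series (fun k => poisson_pmf mu k * x ^ k) (exp (mu * (x - 1))).
Proof.
  replace (exp (mu * (x - 1))) with (exp (- mu) * exp (mu * x))
    by (rewrite <- exp_plus; f_equal; ring).
  apply (is_series_ext (fun k => exp (- mu) * (/ INR (fact k) * (mu * x) ^ k))).
  - intros k; unfold poisson_pmf; rewrite Rpow_mult_distr.
    match goal with |- ?a = ?b => change (@eq R a b) end; unfold Rdiv; ring.
  - apply (is_series_scal_l (V := R_NormedModule)), is_series_Reals.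
    unfold exp; destruct (exist_exp (mu * x)) as [l Hl]; exact Hl.
Qed.

Definition compound_poisson (mu : R) (p : nat -> R) (n : nat) : R :=
  Series (fun k => poisson_pmf mu k * conv_pow p k n).

Lemma compound_poisson_pgf (mu : R) (p : nat -> R) (z G : R) :
  0 <= mu -> (forall n, 0 <= p n) -> 0 < z -> is_series (fun n => p n * z ^ n) G ->
  (forall n, ex_series (fun k => poisson_pmf mu k * conv_pow p k n)) /\
  is_series (fun n => compound_poisson mu p n * z ^ n) (exp (mu * (G - 1))).
Proof.
  intros Hmu Hp Hz HG.
  destruct (is_series_swap_nonneg (fun k n => poisson_pmf mu k * conv_pow p k n * z ^ n)
              (fun k => poisson_pmf mu k * G ^ k) (exp (mu * (G - 1)))) as [Hex Hsum].
  - intros k n; apply Rmult_le_pos; [apply Rmult_le_pos | apply pow_le; lra];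
      [apply poisson_pmf_ge_0, Hmu | apply conv_pow_ge_0, Hp].
  - intros k; apply (is_series_ext (fun n => poisson_pmf mu k * (conv_pow p k n * z ^ n))).
    + intros n; match goal with |- ?a = ?b => change (@eq R a b) end; ring.
    + apply (is_series_scal_l (V := R_NormedModule)), conv_pow_pgf; auto; lra.
  - apply poisson_pgf.
  - assert (Hcoef : forall n, ex_series (fun k => poisson_pmf mu k * conv_pow p k n)).
    { intros n;
      apply (ex_series_ext (fun k => poisson_pmf mu k * conv_pow p k n * z ^ n * / z ^ n)).
      - intros k; match goal with |- ?a = ?b => change (@eq R a b) end.
        field; apply pow_nonzero; lra.
      - apply ex_series_scal_r, Hex. }
    split; [exact Hcoef|].
    apply (is_series_ext (fun n => Series (fun k => poisson_pmf mu k * conv_pow p k n * z ^ n)));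
      [| exact Hsum].
    intros n; apply Series_scal_r.
Qed.

Lemma continuity_pt_eq_0_right (h : R -> R) (r : R) :
  0 < r -> continuity_pt h 0 -> (forall x, 0 < x < r -> h x = 0) -> h 0 = 0.
Proof.
  intros Hr Hc Hh; destruct (Req_dec (h 0) 0) as [|Hne]; [assumption | exfalso].
  assert (Hpos := Rabs_pos_lt _ Hne).
  destruct (Hc (Rabs (h 0)) Hpos) as [d [Hd Hx]].
  assert (Hm : 0 < Rmin d r) by (apply Rmin_glb_lt; assumption).
  assert (Hmd := Rmin_l d r); assert (Hmr := Rmin_r d r).
  set (x := Rmin d r / 2).
  assert (Hx0 : 0 < x < r) by (unfold x; lra).
  assert (Hdist : R_dist x 0 < d)
    by (unfold R_dist; rewrite Rminus_0_r, Rabs_pos_eq; unfold x; lra).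
  specialize (Hx x (conj (conj I (Rlt_not_eq _ _ (proj1 Hx0))) Hdist)).
  simpl in Hx; unfold R_dist in Hx.
  rewrite Hh, Rminus_0_l, Rabs_Ropp in Hx by exact Hx0; lra.
Qed.

(* Only a one-sided neighbourhood of 0 is available, so [PSeries_ext_recip] does not apply:
   instead all derivatives vanish on (0, r), hence at 0 by continuity, where the n-th one
   is n! d n. *)
Lemma PSeries_eq_0_right_coef (d : nat -> R) (r : R) :
  0 < r -> Rbar_lt r (CV_radius d) -> (forall x, 0 < x < r -> PSeries d x = 0) ->
  forall n, d n = 0.
Proof.
  intros Hr HR Hd n.
  assert (Hin : forall x, 0 <= x <= r -> Rbar_lt (Rabs x) (CV_radius d)).
  { intros x Hx; rewrite Rabs_pos_eq by lra.
    apply (Rbar_le_lt_trans _ r); [simpl; lra | exact HR]. }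
  assert (Hderiv0 : forall x, 0 < x < r -> PSeries (PS_derive_n n d) x = 0).
  { intros x Hx; rewrite <- Derive_n_PSeries by (apply Hin; lra).
    rewrite (Derive_n_ext_loc _ (fun _ => 0)); [destruct n; [reflexivity | apply Derive_n_const]|].
    apply (locally_open (fun t => 0 < t < r)); [| exact Hd | exact Hx].
    apply open_and; [apply open_gt | apply open_lt]. }
  assert (H0 : PSeries (PS_derive_n n d) 0 = 0).
  { apply (continuity_pt_eq_0_right _ r Hr); [| exact Hderiv0].
    apply PSeries_continuity; rewrite CV_radius_derive_n; apply Hin; lra. }
  assert (HR0 : Rbar_lt (Rabs 0) (CV_radius d)) by (apply Hin; lra).
  rewrite <- (Derive_n_PSeries _ _ _ HR0), Derive_n_coef in H0
    by (rewrite Rabs_R0 in HR0; exact HR0).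
  apply Rmult_integral in H0; destruct H0 as [H0 | H0]; [exact H0 | exfalso].
  exact (INR_fact_neq_0 n H0).
Qed.

Lemma pgf_coef_unique (a b : nat -> R) (r : R) :
  (forall n, 0 <= a n) -> (forall n, 0 <= b n) -> 0 < r ->
  (forall x, 0 < x <= r -> exists l,
     is_series (fun n => a n * x ^ n) l /\ is_series (fun n => b n * x ^ n) l) ->
  forall n, a n = b n.
Proof.
  intros Ha Hb Hr Hab n.
  set (d k := a k - b k).
  assert (HR : Rbar_le r (CV_radius d)).
  { destruct (Hab r (conj Hr (Rle_refl r))) as [l [Hla Hlb]].
    apply (proj1 (CV_radius_bounded d)); exists (l + l); intros k.
    assert (Har : forall m, 0 <= a m * r ^ m)
      by (intros; apply Rmult_le_pos; auto; apply pow_le; lra).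
    assert (Hbr : forall m, 0 <= b m * r ^ m)
      by (intros; apply Rmult_le_pos; auto; apply pow_le; lra).
    assert (Hak := is_series_term_le _ _ k Har Hla).
    assert (Hbk := is_series_term_le _ _ k Hbr Hlb).
    specialize (Har k); specialize (Hbr k).
    unfold d; rewrite Rmult_minus_distr_r; apply Rabs_le; lra. }
  assert (Hd : forall k, d k = 0).
  { apply (PSeries_eq_0_right_coef d (r / 2));
      [lra | apply (Rbar_lt_le_trans _ r); [simpl; lra | exact HR] |].
    intros x Hx; destruct (Hab x ltac:(lra)) as [l [Hla Hlb]].
    apply is_pseries_unique, is_pseries_R.
    replace 0 with (l - l) by ring.
    apply (is_series_ext (fun k => a k * x ^ k - b k * x ^ k)).
    { intros k; unfold d; match goal with |- ?u = ?v => change (@eq R u v) end; ring. }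
    apply (is_series_minus (V := R_NormedModule)); assumption. }
  specialize (Hd n); unfold d in Hd; lra.
Qed.

Lemma compound_poisson_of_pgf (mu : R) (p v : nat -> R) :
  0 <= mu -> (forall n, 0 <= p n) -> (forall n, 0 <= v n) ->
  (forall z, 0 < z < 1 -> exists G,
     is_series (fun n => p n * z ^ n) G /\ is_series (fun n => v n * z ^ n) (exp (mu * (G - 1)))) ->
  forall n, is_series (fun k => poisson_pmf mu k * conv_pow p k n) (v n).
Proof.
  intros Hmu Hp Hv Hpgf.
  assert (Hcp : forall z, 0 < z < 1 -> exists G,
    (forall n, ex_series (fun k => poisson_pmf mu k * conv_pow p k n)) /\
    is_series (fun n => compound_poisson mu p n * z ^ n) G /\
    is_series (fun n => v n * z ^ n) G).
  { intros z Hz; destruct (Hpgf z Hz) as [G [HG HvG]].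
    destruct (compound_poisson_pgf mu p z G) as [Hex Hcp]; auto; [lra|].
    exists (exp (mu * (G - 1))); auto. }
  destruct (Hcp (/ 2) ltac:(lra)) as [G [Hex _]].
  assert (Hcp0 : forall n, 0 <= compound_poisson mu p n).
  { intros n; apply (is_series_ge_0 (fun k => poisson_pmf mu k * conv_pow p k n));
      [| apply Series_correct, Hex].
    intros k; apply Rmult_le_pos; [apply poisson_pmf_ge_0, Hmu | apply conv_pow_ge_0, Hp]. }
  intros n; rewrite <- (pgf_coef_unique (compound_poisson mu p) v (/ 2) Hcp0 Hv ltac:(lra)).
  - apply Series_correct, Hex.
  - intros x Hx; destruct (Hcp x ltac:(lra)) as [l [_ Hl]]; exists l; exact Hl.
Qed.

Lemma BD_exp_mixture_pgf delta alpha beta (P : R -> nat -> R) (pY : nat -> R) z F :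
  0 < delta -> 0 <= beta -> beta < alpha -> is_BD_law alpha beta P ->
  (forall n, has_integral_0_inf (fun t => P t n * (delta * exp (- delta * t))) (pY n)) ->
  0 <= z < 1 -> hyp2F1_1 (gam delta alpha beta) (xi (qq alpha beta) z) F ->
  is_series (fun n => pY n * z ^ n) (1 - (1 - qq alpha beta) * F).
Proof.
  intros Hd Hb Hab HP HY Hz HF.
  apply (mixture_pgf P (fun t => delta * exp (- delta * t)) (fun t => phi alpha beta t z));
    [exact Hz | | apply is_RInt_exp_density, Hd | | | | apply phi_mean; assumption].
  - intros t _; apply Rmult_le_pos; [lra | left; apply exp_pos].
  - intros t Ht; destruct (proj1 (HP t Ht)) as [HP0 HP1].
    split; [exact HP0 | apply is_series_Reals, HP1].
  - intros t Ht; apply is_series_Reals, (proj2 (HP t Ht)), Hz.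
  - intros n; apply has_integral_0_inf_RInt_pinfty, HY.
Qed.

Lemma BD_exp_mixture_ge_0 delta alpha beta (P : R -> nat -> R) (pY : nat -> R) n :
  0 < delta -> is_BD_law alpha beta P ->
  (forall n, has_integral_0_inf (fun t => P t n * (delta * exp (- delta * t))) (pY n)) ->
  0 <= pY n.
Proof.
  intros Hd HP HY.
  apply (is_RInt_pinfty_ge_0 (fun t => P t n * (delta * exp (- delta * t))));
    [| apply has_integral_0_inf_RInt_pinfty, HY].
  intros t Ht; apply Rmult_le_pos; [apply (proj1 (proj1 (HP t Ht))) |].
  apply Rmult_le_pos; [lra | left; apply exp_pos].
Qed.

Theorem mainTheorem8
  (delta alpha beta theta : R)
  (Hdelta : 0 < delta) (Hbeta : 0 <= beta) (Hab : beta < alpha) (Htheta : 0 < theta)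
  (pV : nat -> R) (HV : is_pmf pV)
  (HVpgf : forall z, 0 <= z < 1 -> exists F,
      hyp2F1_1 (gam delta alpha beta) (xi (qq alpha beta) z) F /\
      pgf_at pV z (exp (- (theta / gam delta alpha beta) * F)))
  (P : R -> nat -> R) (HP : is_BD_law alpha beta P)
  (pY : nat -> R)
  (HY : forall n, has_integral_0_inf (fun t => P t n * (delta * exp (- delta * t))) (pY n)) :
  (forall n, infinite_sum
     (fun k => poisson_pmf (theta / ((1 - qq alpha beta) * gam delta alpha beta)) k
               * conv_pow pY k n) (pV n)) /\
  (forall z F, 0 <= z < 1 ->
     hyp2F1_1 (gam delta alpha beta) (xi (qq alpha beta) z) F ->
     has_integral_0_inf (fun t => phi alpha beta t z * (delta * exp (- delta * t)))
       (1 - (1 - qq alpha beta) * F)) /\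
  (forall z G, 0 <= z < 1 -> pgf_at pV z G ->
     exists I, has_integral_0_inf
                 (fun t => (phi alpha beta t z - 1) * (delta * exp (- delta * t))) I /\
               ln G = theta / ((1 - qq alpha beta) * gam delta alpha beta) * I).
Proof.
  assert (Hq := qq_bounds alpha beta Hbeta Hab).
  assert (Hg : 0 < gam delta alpha beta) by (apply Rdiv_lt_0_compat; lra).
  set (mu := theta / ((1 - qq alpha beta) * gam delta alpha beta)).
  assert (Hexponent : forall F, mu * ((1 - (1 - qq alpha beta) * F) - 1) =
                                - (theta / gam delta alpha beta) * F)
    by (intros F; unfold mu; field; lra).
  split; [|split].
  - intros n; apply is_series_Reals, compound_poisson_of_pgf.
    + unfold mu; apply Rlt_le, Rdiv_lt_0_compat; [lra | apply Rmult_lt_0_compat; lra].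
    + intros m; apply (BD_exp_mixture_ge_0 delta alpha beta P); assumption.
    + apply HV.
    + intros z Hz; destruct (HVpgf z ltac:(lra)) as [F [HF HVz]].
      exists (1 - (1 - qq alpha beta) * F); split.
      * apply (BD_exp_mixture_pgf delta alpha beta P); auto; lra.
      * rewrite Hexponent; apply is_series_Reals, HVz.
  - intros z F Hz HF; apply has_integral_0_inf_RInt_pinfty, phi_mean; assumption.
  - intros z G Hz HG; destruct (HVpgf z Hz) as [F [HF HVz]].
    exists (- (1 - qq alpha beta) * F); split.
    + apply has_integral_0_inf_RInt_pinfty, phi_sub_1_mean; assumption.
    + rewrite (uniqueness_sum _ _ _ HG HVz), ln_exp, <- Hexponent; unfold mu; ring.
Qed.
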